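(* Let $\mathbf n=(n_1,\dots,n_k)$ with $n_i\ge0$ integers and $\sum n_i=n$, and set $N_j=n_1+\dots+n_j$ ($N_0=0$). For every $m\in\mathbb N$, substituting $\lambda_{N_{j-1}+i}=\mu_jq^{-2(i-1)}$ for $j=1,\dots,k$, $i=1,\dots,n_j$ into $\vartheta_m(q^{-2},\lambda)$ gives $\vartheta_m(\mathbf n,q^{-2},\mu)$.
   Context: $\hat m=\frac{1-q^{-2m}}{1-q^{-2}}$. For indeterminates $\lambda=(\lambda_1,\dots,\lambda_n)$ and $m\ge1$, $\vartheta_m(q^{-2},\lambda)=\sum_{\ell=1}^n(1-q^{-2})^{\ell-1}\sum_{\mathbf d}\sum_{1\le j_1<\dots<j_\ell\le n}\lambda_{j_1}^{d_1}\cdots\lambda_{j_\ell}^{d_\ell}$ and, for $\mu=(\mu_1,\dots,\mu_k)$, $\vartheta_m(\mathbf n,q^{-2},\mu)=\sum_{\ell=1}^k(1-q^{-2})^{\ell-1}\sum_{\mathbf d}\sum_{1\le i_1<\dots<i_\ell\le k}\hat n_{i_1}\cdots\hat n_{i_\ell}\mu_{i_1}^{d_1}\cdots\mu_{i_\ell}^{d_\ell}$, where in both $\mathbf d=(d_1,\dots,d_\ell)$ runs over $\ell$-tuples of positive integers with sum $m$. *)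

From HB Require Import structures.
From mathcomp Require Import all_boot all_order all_algebra.
Set Implicit Arguments. Unset Strict Implicit. Unset Printing Implicit Defensive.
Import Order.TTheory GRing.Theory Num.Theory.
Local Open Scope ring_scope.

Definition qhat (R : unitRingType) (q : R) (m : nat) : R :=
  (1 - q ^- (2 * m)) / (1 - q ^- 2).

(* d = (d_1,...,d_l) : l-tuples of positive integers with sum m
   (each d_i <= m, so d_i is stored in 'I_m.+1) *)
Definition compositions (l m : nat) : pred {ffun 'I_l -> 'I_m.+1} :=
  fun d => [forall i, 0 < (d i : nat)]%N && (\sum_(i < l) (d i : nat) == m)%N.

Definition strinc (l n : nat) : pred {ffun 'I_l -> 'I_n} :=
  fun j => [forall a : 'I_l, forall b : 'I_l, (a < b)%N ==> (j a < j b)%N].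

Definition vartheta (R : comRingType) (m : nat) (t : R) (n : nat)
    (lam : 'I_n -> R) : R :=
  \sum_(1 <= l < n.+1) (1 - t) ^+ l.-1 *
    \sum_(d : {ffun 'I_l -> 'I_m.+1} | compositions d)
      \sum_(j : {ffun 'I_l -> 'I_n} | strinc j)
        \prod_(i < l) lam (j i) ^+ d i.

Definition vartheta_n (R : comUnitRingType) (m : nat) (q : R) (k : nat)
    (nn : 'I_k -> nat) (mu : 'I_k -> R) : R :=
  \sum_(1 <= l < k.+1) (1 - q ^- 2) ^+ l.-1 *
    \sum_(d : {ffun 'I_l -> 'I_m.+1} | compositions d)
      \sum_(j : {ffun 'I_l -> 'I_k} | strinc j)
        \prod_(i < l) (qhat q (nn (j i)) * mu (j i) ^+ d i).

(* N_j = n_1 + ... + n_j (for 0-based j : 'I_k, this is N_{j} with j counted from 0) *)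
Definition partN (k : nat) (nn : 'I_k -> nat) (j : nat) : nat :=
  (\sum_(j' < k | (j' < j)%N) nn j')%N.

(* Multiply both sides by c = 1 - t, where t = q^-2.  For weights w_s(d), c times
   sum_l c^(l-1) sum_(d, j) prod_i w_(j_i)(d_i) is, up to the constant term [m == 0],
   the coefficient of X^m in prod_s (1 + sum_(d >= 1) c w_s(d) X^d): expanding this
   product over subsets of indices, an l-subset is the image of exactly one strictly
   increasing j, and the X^m coefficient of a product of l series is a sum over the
   compositions d of m.  For w_s(d) = lambda_s^d each factor is the series of
   (1 - t lambda X) / (1 - lambda X), so along a block lambda = mu, mu t, ...,
   mu t^(n_j - 1) the factors telescope modulo X^(m+1) to
   (1 - t^(n_j) mu X) / (1 - mu X) = 1 + sum_(d >= 1) (1 - t^(n_j)) mu^d X^d,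
   which is the factor for the weights hat(n_j) mu^d, as c hat(n_j) = 1 - t^(n_j). *)

From HB Require Import structures.
From mathcomp Require Import all_boot all_order all_algebra.
From mathcomp Require Import ring.
Set Implicit Arguments. Unset Strict Implicit. Unset Printing Implicit Defensive.
Import Order.TTheory GRing.Theory Num.Theory.
Local Open Scope ring_scope.

Lemma sorted_enum_ord m : sorted (relpre val ltn) (enum 'I_m).
Proof. by rewrite -sorted_map val_enum_ord iota_ltn_sorted. Qed.

Section StrictlyIncreasing.
Variables l n : nat.
Implicit Types j : {ffun 'I_l -> 'I_n}.

Lemma strinc_inj j : strinc j -> injective j.
Proof.
move=> /forallP j_incr a b eq_jab; apply: val_inj => /=.
have [ltab|ltba|//] := ltngtP a b.
  by have := forallP (j_incr a) b; rewrite ltab eq_jab ltnn.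
by have := forallP (j_incr b) a; rewrite ltba eq_jab ltnn.
Qed.

Lemma strinc_sorted j : strinc j -> sorted (relpre val ltn) (codom j).
Proof.
move=> /forallP j_incr; rewrite codomE sorted_map.
apply: sub_sorted (sorted_enum_ord l) => a b /= ltab.
by have := forallP (j_incr a) b; rewrite ltab.
Qed.

Lemma strinc_imset_inj j1 j2 : strinc j1 -> strinc j2 ->
  [set j1 i | i : 'I_l] = [set j2 i | i : 'I_l] -> j1 = j2.
Proof.
move=> j1_incr j2_incr eq_img.
have mem_img j x : (x \in codom j) = (x \in [set j i | i : 'I_l]).
  by apply/codomP/imsetP => -[i]; exists i.
apply: (can_inj (@fgraphK _ _)); apply: val_inj; rewrite /= -!codom_ffun.
apply: (irr_sorted_eq (leT := relpre val ltn)) => [? ? ?|?|||x].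
- exact: ltn_trans.
- exact: ltnn.
- exact: strinc_sorted.
- exact: strinc_sorted.
- by rewrite !mem_img eq_img.
Qed.

Lemma sorted_enum_set (S : {set 'I_n}) : sorted (relpre val ltn) (enum S).
Proof.
rewrite /enum_mem -enumT; apply: sorted_filter (sorted_enum_ord n).
by move=> ? ? ?; apply: ltn_trans.
Qed.

Lemma strinc_imset_surj (S : {set 'I_n}) : #|S| = l ->
  exists2 j, strinc j & [set j i | i : 'I_l] = S.
Proof.
move=> cardS; pose j := [ffun i => enum_val (cast_ord (esym cardS) i)].
have nth_j x0 i : val (j i) = val (nth x0 (enum S) i).
  by rewrite ffunE (enum_val_nth x0).
exists j.
  apply/forallP => a; apply/forallP => b; apply/implyP => ltab.
  rewrite (nth_j (j a) a) (nth_j (j a) b).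
  apply: (sorted_ltn_nth _ _ (sorted_enum_set S)); rewrite ?inE -?cardE ?cardS //.
  by move=> ? ? ?; apply: ltn_trans.
apply/setP => x; apply/imsetP/idP => [[i _ ->]|Sx]; first by rewrite ffunE enum_valP.
by exists (cast_ord cardS (enum_rank_in Sx x)); rewrite ?ffunE ?cast_ordK ?enum_rankK_in.
Qed.

Lemma big_strinc_imset (V : nmodType) (G : {set 'I_n} -> V) :
  \sum_(j | strinc j) G [set j i | i : 'I_l] = \sum_(S : {set 'I_n} | #|S| == l) G S.
Proof.
pose img j := [set j i | i : 'I_l].
have img_inj : {in [set j | strinc j] &, injective img}.
  by move=> j1 j2; rewrite !inE; apply: strinc_imset_inj.
have card_img : [set S : {set 'I_n} | #|S| == l] = img @: [set j | strinc j].
  apply/setP => S; rewrite inE; apply/eqP/imsetP => [/strinc_imset_surj[j]|[j]].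
    by exists j; rewrite ?inE.
  by rewrite inE => j_incr ->; rewrite card_imset ?card_ord //; apply: strinc_inj.
rewrite (eq_bigl [in [set S : {set 'I_n} | #|S| == l]]); last by move=> S; rewrite inE.
by rewrite card_img big_imset //; apply: eq_bigl => j; rewrite inE.
Qed.

End StrictlyIncreasing.

Lemma sum_set_by_card (V : nmodType) (T : finType) (F : {set T} -> V) :
  \sum_(S : {set T}) F S = \sum_(0 <= c < #|T|.+1) \sum_(S : {set T} | #|S| == c) F S.
Proof.
under [RHS]eq_bigr do rewrite big_mkcond.
rewrite exchange_big /=; apply: eq_bigr => S _.
under eq_bigr do rewrite eq_sym.
by rewrite -big_mkcond big_nat1_eq ltnS max_card.
Qed.

Section TruncatedSeries.
Variables (R : comNzRingType) (m : nat).

Definition trunc_series (w : nat -> R) : {poly R} :=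
  \sum_(d < m.+1 | (0 < d)%N) w d *: 'X^d.

Lemma coef_trunc_series w i :
  (trunc_series w)`_i = if (0 < i <= m)%N then w i else 0.
Proof.
rewrite coef_sumMXn; have [/andP[i_gt0 i_le_m]|] := boolP (0 < i <= m)%N.
  rewrite (big_pred1 (Ordinal (i_le_m : (i < m.+1)%N))) // => d /=.
  by rewrite -val_eqE /=; case: eqP => [->|]; rewrite ?andbF ?i_gt0.
move=> out_i; apply: big1 => d /andP[d_gt0 /eqP eq_di]; move: out_i.
by rewrite -eq_di d_gt0 -ltnS ltn_ord.
Qed.

Lemma eq_trunc_series w w' : (forall d, (0 < d)%N -> w d = w' d) ->
  trunc_series w = trunc_series w'.
Proof. by move=> eq_w; apply: eq_bigr => d /eq_w ->. Qed.

Lemma coef_prod_trunc_series l (w : 'I_l -> nat -> R) :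
  (\prod_(i < l) trunc_series (w i))`_m =
  \sum_(d : {ffun 'I_l -> 'I_m.+1} | compositions d) \prod_(i < l) w i (d i).
Proof.
under eq_bigr do rewrite /trunc_series big_mkcond.
rewrite bigA_distr_bigA /=.
have prod_terms (d : {ffun 'I_l -> 'I_m.+1}) :
    \prod_i (if (0 < d i)%N then w i (d i) *: 'X^(d i) else 0) =
    (if [forall i, (0 < d i)%N] then \prod_i w i (d i) else 0) *: 'X^(\sum_i (d i : nat)).
  have [d_gt0|] := boolP [forall i, 0 < d i]%N.
    under eq_bigr => i _ do rewrite (forallP d_gt0 i) -mul_polyC.
    by rewrite big_split /= -rmorph_prod prodrXr mul_polyC.
  rewrite negb_forall => /existsP[i /negbTE d_i0].
  by rewrite (bigD1 i) //= d_i0 mul0r scale0r.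
rewrite (eq_bigr _ (fun d _ => prod_terms d)).
rewrite coef_sumMXn [LHS]big_mkcond [RHS]big_mkcond; apply: eq_bigr => d _.
by rewrite /compositions; case: [forall i, _]; case: (_ == m).
Qed.

End TruncatedSeries.

Definition theta_sum (R : comNzRingType) (c : R) (m n : nat)
    (w : 'I_n -> nat -> R) : R :=
  \sum_(1 <= l < n.+1) c ^+ l.-1 *
    \sum_(d : {ffun 'I_l -> 'I_m.+1} | compositions d)
      \sum_(j : {ffun 'I_l -> 'I_n} | strinc j) \prod_(i < l) w (j i) (d i).

Lemma theta_sum_genfun (R : comNzRingType) (c : R) m n (w : 'I_n -> nat -> R) :
  c * theta_sum c m w =
  (\prod_(s < n) (1 + trunc_series m (fun d => c * w s d)))`_m - (m == 0)%:R.
Proof.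
set Y := fun s => trunc_series m (fun d => c * w s d).
have expand : (\prod_(s < n) (1 + Y s))`_m =
    \sum_(S : {set 'I_n}) (\prod_(s in S) Y s)`_m.
  under eq_bigr do rewrite addrC.
  by rewrite bigA_distr coef_sum; under eq_bigr do rewrite -big_mkcond.
have coef_card0 : \sum_(S : {set 'I_n} | #|S| == 0) (\prod_(s in S) Y s)`_m = (m == 0)%:R.
  by rewrite (big_pred1 set0) => [|S]; rewrite ?big_set0 ?coef1 ?cards_eq0.
have coef_card l : (0 < l)%N ->
    \sum_(S : {set 'I_n} | #|S| == l) (\prod_(s in S) Y s)`_m =
    c ^+ l * \sum_(d : {ffun 'I_l -> 'I_m.+1} | compositions d)
      \sum_(j : {ffun 'I_l -> 'I_n} | strinc j) \prod_(i < l) w (j i) (d i).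
  move=> l_gt0; rewrite -big_strinc_imset mulr_sumr.
  under [RHS]eq_bigr do rewrite mulr_sumr.
  rewrite [RHS]exchange_big /=; apply: eq_bigr => j j_incr.
  rewrite big_imset /=; last by move=> ? ? _ _; apply: strinc_inj.
  rewrite coef_prod_trunc_series; apply: eq_bigr => d _.
  by rewrite big_split /= prodr_const card_ord.
rewrite expand sum_set_by_card card_ord big_ltn // coef_card0 addrC addKr.
rewrite /theta_sum mulr_sumr; apply: eq_big_nat => l /andP[l_gt0 _].
by rewrite coef_card // mulrA -exprS prednK.
Qed.

Section Truncation.
Variables (R : comNzRingType) (m : nat).
Implicit Types p q : {poly R}.

Definition eq_upto p q := forall i, (i <= m)%N -> p`_i = q`_i.

Lemma eq_upto_refl p : eq_upto p p.
Proof. by []. Qed.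

Lemma eq_upto_sym p q : eq_upto p q -> eq_upto q p.
Proof. by move=> epq i le_im; rewrite epq. Qed.

Lemma eq_upto_trans p q r : eq_upto p q -> eq_upto q r -> eq_upto p r.
Proof. by move=> epq eqr i le_im; rewrite epq // eqr. Qed.

Lemma eq_upto_mul p p' q q' : eq_upto p p' -> eq_upto q q' -> eq_upto (p * q) (p' * q').
Proof.
move=> epp' eqq' i le_im; rewrite !coefM; apply: eq_bigr => j _.
by rewrite epp' ?eqq' // (leq_trans _ le_im) ?leq_subr // -ltnS.
Qed.

Lemma eq_upto_prod (I : finType) (F G : I -> {poly R}) :
  (forall i, eq_upto (F i) (G i)) -> eq_upto (\prod_i F i) (\prod_i G i).
Proof. by move=> eFG; apply: (big_ind2 eq_upto) => // *; apply: eq_upto_mul. Qed.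

Lemma eq_upto_cancel_1BZX a p q :
  eq_upto ((1 - a *: 'X) * p) ((1 - a *: 'X) * q) -> eq_upto p q.
Proof.
move=> epq; elim=> [|i IHi] le_im; have := epq _ le_im;
  rewrite !mulrBl !mul1r -!scalerAl !coefB !coefZ !coefXM /=.
  by rewrite !mulr0 !subr0.
by rewrite IHi ?(ltnW le_im) // => /addIr.
Qed.

(* The truncation of the power series of (1 - b X) / (1 - a X). *)
Definition ratio_series (a b : R) : {poly R} :=
  1 + trunc_series m (fun d => (a - b) * a ^+ d.-1).

Lemma ratio_seriesP a b : eq_upto ((1 - a *: 'X) * ratio_series a b) (1 - b *: 'X).
Proof.
move=> i le_im; rewrite mulrBl mul1r -scalerAl coefB coefZ coefXM /ratio_series.
rewrite !coefD !coef_trunc_series coefN coefZ coefX !coef1.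
case: i le_im => [|[|i]] le_im /=; first by ring.
  by rewrite le_im expr0; ring.
by rewrite le_im (ltnW le_im) exprS; ring.
Qed.

Lemma prod_ratio_series (a : nat -> R) r :
  eq_upto (\prod_(i < r) ratio_series (a i) (a i.+1)) (ratio_series (a 0%N) (a r)).
Proof.
apply: (@eq_upto_cancel_1BZX (a 0%N)); elim: r => [|r IHr].
  by rewrite big_ord0 mulr1; apply: eq_upto_sym; apply: ratio_seriesP.
rewrite big_ord_recr /= mulrA.
apply: eq_upto_trans (eq_upto_mul IHr (eq_upto_refl _)) _.
apply: eq_upto_trans (eq_upto_mul (ratio_seriesP _ _) (eq_upto_refl _)) _.
apply: eq_upto_trans (ratio_seriesP _ _) _.
exact/eq_upto_sym/ratio_seriesP.
Qed.

Lemma prod_geometric_block (t a : R) r :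
  eq_upto (\prod_(i < r) (1 + trunc_series m (fun d => (1 - t) * (a * t ^+ i) ^+ d)))
          (1 + trunc_series m (fun d => (1 - t ^+ r) * a ^+ d)).
Proof.
have ratio_block i : 1 + trunc_series m (fun d => (1 - t) * (a * t ^+ i) ^+ d) =
    ratio_series (a * t ^+ i) (a * t ^+ i.+1).
  by congr (1 + _); apply: eq_trunc_series => -[|d] //= _; rewrite !exprS; ring.
under eq_bigr do rewrite ratio_block.
have -> : 1 + trunc_series m (fun d => (1 - t ^+ r) * a ^+ d) =
    ratio_series (a * t ^+ 0) (a * t ^+ r).
  by congr (1 + _); apply: eq_trunc_series => -[|d] //= _; rewrite expr0 mulr1 exprS; ring.
exact: prod_ratio_series (fun i => a * t ^+ i) r.
Qed.

End Truncation.

Lemma partN_widen k (nn : 'I_k.+1 -> nat) j : (j <= k)%N ->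
  partN nn j = partN (fun j' => nn (widen_ord (leqnSn k) j')) j.
Proof.
move=> le_jk; rewrite /partN [LHS]big_mkcond big_ord_recr /= ltnNge le_jk addn0.
by rewrite -big_mkcond.
Qed.

Lemma partN_full k (nn : 'I_k -> nat) : partN nn k = (\sum_(j < k) nn j)%N.
Proof. by apply: eq_bigl => j; rewrite ltn_ord. Qed.

Lemma partN_bound k (nn : 'I_k -> nat) (j : 'I_k) :
  (partN nn j + nn j <= \sum_(j' < k) nn j')%N.
Proof.
rewrite [X in (_ <= X)%N](bigID (fun j' : 'I_k => (j' < j)%N)) leq_add2l /=.
by rewrite (bigD1 j) /= ?ltnn ?leq_addr.
Qed.

Lemma big_nat_partN T (idx : T) (op : Monoid.law idx) k (nn : 'I_k -> nat)
    (F : nat -> T) :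
  \big[op/idx]_(0 <= s < \sum_(j < k) nn j) F s =
  \big[op/idx]_(j < k) \big[op/idx]_(0 <= i < nn j) F (partN nn j + i)%N.
Proof.
elim: k nn => [|k IHk] nn; first by rewrite !big_ord0 big_geq.
set S := (\sum_(j < k) nn (widen_ord (leqnSn k) j))%N.
rewrite !big_ord_recr /= (@big_cat_nat _ _ _ S) ?leq_addr //= IHk.
congr (op _ _).
  by apply: eq_bigr => j _; rewrite partN_widen 1?ltnW.
rewrite partN_widen // partN_full -/S -{1}[S]add0n big_addn addKn.
by apply: eq_bigr => i _; rewrite addnC.
Qed.

Lemma big_ord_blocks T (idx : T) (op : Monoid.law idx) k (nn : 'I_k -> nat) n
    (F : 'I_n -> T) (G : forall j : 'I_k, 'I_(nn j) -> T) :
  n = (\sum_(j < k) nn j)%N ->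
  (forall j (i : 'I_(nn j)) (p : 'I_n), val p = (partN nn j + i)%N -> F p = G j i) ->
  \big[op/idx]_(p < n) F p = \big[op/idx]_(j < k) \big[op/idx]_(i < nn j) G j i.
Proof.
move=> def_n FG; pose F' s := oapp F idx (insub s).
have -> : \big[op/idx]_(p < n) F p = \big[op/idx]_(0 <= s < n) F' s.
  by rewrite big_mkord; apply: eq_bigr => p _; rewrite /F' valK.
rewrite def_n big_nat_partN; apply: eq_bigr => j _; rewrite big_mkord.
apply: eq_bigr => i _; rewrite /F'; case: insubP => [p _ val_p|/negP[]].
  exact: FG val_p.
by rewrite def_n (leq_trans _ (partN_bound nn j)) // ltn_add2l.
Qed.

Lemma exprVM (R : unitRingType) (x : R) a b : x ^- (a * b) = (x ^- a) ^+ b.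
Proof. by rewrite -exprVn exprM exprVn. Qed.

Lemma mul_qhat (R : comUnitRingType) (q : R) r : (1 - q ^- 2) \is a GRing.unit ->
  (1 - q ^- 2) * qhat q r = 1 - (q ^- 2) ^+ r.
Proof. by move=> unit_t; rewrite /qhat mulrC divrK // exprVM. Qed.

Theorem proposition4p5 (R : comUnitRingType) (q : R)
    (hq : q \is a GRing.unit) (ht : (1 - q ^- 2) \is a GRing.unit)
    (k : nat) (nn : 'I_k -> nat) (n : nat) (hn : n = (\sum_(j < k) nn j)%N)
    (mu : 'I_k -> R) (lam : 'I_n -> R)
    (hlam : forall (j : 'I_k) (i : nat) (p : 'I_n),
        (i < nn j)%N -> (p : nat) = (partN nn j + i)%N ->
        lam p = mu j * q ^- (2 * i))
    (m : nat) :
  vartheta m (q ^- 2) lam = vartheta_n m q nn mu.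
Proof.
apply: (mulrI ht); set t := q ^- 2.
have -> : vartheta m t lam = theta_sum (1 - t) m (fun s d => lam s ^+ d) by [].
have -> : vartheta_n m q nn mu =
    theta_sum (1 - t) m (fun j d => qhat q (nn j) * mu j ^+ d) by [].
rewrite !theta_sum_genfun; congr (_ - _).
have qhat_block j : 1 + trunc_series m (fun d => (1 - t) * (qhat q (nn j) * mu j ^+ d)) =
    1 + trunc_series m (fun d => (1 - t ^+ nn j) * mu j ^+ d).
  by congr (1 + _); apply: eq_trunc_series => d _; rewrite mulrA mul_qhat.
rewrite [in RHS](eq_bigr _ (fun j _ => qhat_block j)).
have -> : \prod_(p < n) (1 + trunc_series m (fun d => (1 - t) * lam p ^+ d)) =
    \prod_(j < k) \prod_(i < nn j)
      (1 + trunc_series m (fun d => (1 - t) * (mu j * t ^+ i) ^+ d)).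
  apply: big_ord_blocks hn _ => j i p val_p.
  by rewrite (hlam j i p (ltn_ord i) val_p) exprVM.
exact: (eq_upto_prod (fun j => prod_geometric_block (m := m) t (mu j) (nn j))).
Qed.
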